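(* Let $d>0$, $a\geq 7$ be integers with $\gcd(a,d)=1$, write $a=6m+q$ with $0\leq q\leq 5$, and let $\mathfrak{p}_4\subset A=k[x_1,x_2,x_3,x_4]$ be the kernel of the $k$-algebra map $A\to k[t]$, $x_1\mapsto t^{a}$, $x_2\mapsto t^{2a+d}$, $x_3\mapsto t^{3a+3d}$, $x_4\mapsto t^{4a+6d}$ ($k$ a field). Then $\mathfrak{p}_4$ is minimally generated by the set $H_q$, where: $H_0=\{x_3^2-x_1^2x_4,\ x_2^3-x_1^3x_3,\ x_1^{4m+d}-x_4^{m}\}$; $H_1=\{x_3^2-x_1^2x_4,\ x_2^3-x_1^3x_3,\ x_1^{7}-x_2x_4,\ x_1^{4}x_2^{2}-x_3x_4,\ x_1^{2}x_2^{2}x_3-x_4^{2}\}$ if $m=d=1$, and otherwise $H_1=\{x_3^2-x_1^2x_4,\ x_2^3-x_1^3x_3,\ x_1^{4m+d-6}x_2^{5}-x_4^{m+1},\ x_1^{4m+d-1}x_2^{2}-x_3x_4^{m},\ x_1^{4m+d+2}-x_2x_4^{m}\}$; $H_2=\{x_3^2-x_1^2x_4,\ x_2^3-x_1^3x_3,\ x_1^{4m+d-4}x_2^{4}-x_4^{m+1},\ x_1^{4m+d+1}x_2-x_3x_4^{m},\ x_1^{4m+d+4}-x_2^{2}x_4^{m}\}$; $H_3=\{x_3^2-x_1^2x_4,\ x_2^3-x_1^3x_3,\ x_1^{4m+d-2}x_2^{3}-x_4^{m+1},\ x_1^{4m+d+3}-x_3x_4^{m}\}$; $H_4=\{x_3^2-x_1^2x_4,\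 x_2^3-x_1^3x_3,\ x_1^{4m+d}x_2^{2}-x_4^{m+1},\ x_1^{4m+d+5}-x_2x_3x_4^{m}\}$; $H_5=\{x_3^2-x_1^2x_4,\ x_2^3-x_1^3x_3,\ x_1^{4m+d+2}x_2-x_4^{m+1},\ x_1^{4m+d+7}-x_2^{2}x_3x_4^{m}\}$. *)

From mathcomp Require Import all_boot all_algebra.
From mathcomp Require Import mpoly.
Set Implicit Arguments. Unset Strict Implicit. Unset Printing Implicit Defensive.
Import GRing.Theory.
Local Open Scope ring_scope.

(* Variables x_1, x_2, x_3, x_4 are 'X_0, 'X_1, 'X_2, 'X_3 (0-based indices). *)
Definition x1 (k : fieldType) : {mpoly k[4]} := 'X_(inord 0).
Definition x2 (k : fieldType) : {mpoly k[4]} := 'X_(inord 1).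
Definition x3 (k : fieldType) : {mpoly k[4]} := 'X_(inord 2).
Definition x4 (k : fieldType) : {mpoly k[4]} := 'X_(inord 3).

Definition curve_exp (a d : nat) (i : 'I_4) : nat :=
  match val i with
  | 0 => a | 1 => 2 * a + d | 2 => 3 * a + 3 * d | _ => 4 * a + 6 * d
  end.

Definition curve_map (k : fieldType) (a d : nat) (p : {mpoly k[4]}) : {poly k} :=
  mmap (@polyC k) (fun i => 'X^(curve_exp a d i)) p.

Definition p4 (k : fieldType) (a d : nat) (p : {mpoly k[4]}) : Prop :=
  curve_map a d p = 0.

Definition in_ideal (k : fieldType) (hs : seq {mpoly k[4]}) (p : {mpoly k[4]}) : Prop :=
  exists cs : seq {mpoly k[4]}, size cs = size hs /\
    p = \sum_(i < size hs) cs`_i * hs`_i.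

Definition generates (k : fieldType) (hs : seq {mpoly k[4]})
  (I : {mpoly k[4]} -> Prop) : Prop :=
  forall p, in_ideal hs p <-> I p.

(* hs minimally generates I: hs generates I and no proper subfamily does
   (by monotonicity of generated ideals it suffices to drop one element). *)
Definition minimally_generates (k : fieldType) (hs : seq {mpoly k[4]})
  (I : {mpoly k[4]} -> Prop) : Prop :=
  generates hs I /\
  forall i : nat, (i < size hs)%N -> ~ generates (take i hs ++ drop i.+1 hs) I.

Definition H (k : fieldType) (m d q : nat) : seq {mpoly k[4]} :=
  let X1 := x1 k in let X2 := x2 k in let X3 := x3 k in let X4 := x4 k in
  let g1 := X3 ^+ 2 - X1 ^+ 2 * X4 in
  let g2 := X2 ^+ 3 - X1 ^+ 3 * X3 in
  match q with
  | 0 => [:: g1; g2; X1 ^+ (4 * m + d) - X4 ^+ m]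
  | 1 => if (m == 1%N) && (d == 1%N) then
           [:: g1; g2; X1 ^+ 7 - X2 * X4; X1 ^+ 4 * X2 ^+ 2 - X3 * X4;
               X1 ^+ 2 * X2 ^+ 2 * X3 - X4 ^+ 2]
         else
           [:: g1; g2; X1 ^+ (4 * m + d - 6) * X2 ^+ 5 - X4 ^+ m.+1;
               X1 ^+ (4 * m + d - 1) * X2 ^+ 2 - X3 * X4 ^+ m;
               X1 ^+ (4 * m + d + 2) - X2 * X4 ^+ m]
  | 2 => [:: g1; g2; X1 ^+ (4 * m + d - 4) * X2 ^+ 4 - X4 ^+ m.+1;
             X1 ^+ (4 * m + d + 1) * X2 - X3 * X4 ^+ m;
             X1 ^+ (4 * m + d + 4) - X2 ^+ 2 * X4 ^+ m]
  | 3 => [:: g1; g2; X1 ^+ (4 * m + d - 2) * X2 ^+ 3 - X4 ^+ m.+1;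
             X1 ^+ (4 * m + d + 3) - X3 * X4 ^+ m]
  | 4 => [:: g1; g2; X1 ^+ (4 * m + d) * X2 ^+ 2 - X4 ^+ m.+1;
             X1 ^+ (4 * m + d + 5) - X2 * X3 * X4 ^+ m]
  | _ => [:: g1; g2; X1 ^+ (4 * m + d + 2) * X2 - X4 ^+ m.+1;
             X1 ^+ (4 * m + d + 7) - X2 ^+ 2 * X3 * X4 ^+ m]
  end.

From mathcomp Require Import all_boot all_algebra.
From mathcomp Require Import mpoly.
From mathcomp Require Import ring zify.
Set Implicit Arguments. Unset Strict Implicit. Unset Printing Implicit Defensive.
Import GRing.Theory.
Local Open Scope ring_scope.

(* The monomial x1^e x2^f x3^g x4^h is mapped to t^(tdeg e f g h), where
   tdeg = a(e + 2f + 3g + 4h) + d(f + 3g + 6h).  Call it standard when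
   f <= 2, g <= 1 and f + 3g + 6h < a.  Since gcd(a, d) = 1, distinct
   standard monomials have distinct t-degrees, so an element of p4 supported
   on standard monomials is zero (standard_kernel_eq0).

   Generation (generates_of_lowering): assume the ideal (hs) lies in p4,
   contains x2^3 - x1^3 x3 and x3^2 - x1^2 x4, and lets every monomial with
   f + 3g + 6h >= a be rewritten, via a binomial of (hs) acting on one of
   its divisors, into a monomial of smaller weight 3f + 7g + 13h.  Then
   every polynomial is congruent modulo (hs) to one supported on standard
   monomials, hence (hs) = p4.

   Minimality (minimal_of_witnesses): each element of H_q has a monomial
   divisible by no term of the other elements; the coefficient of that
   monomial vanishes on the ideal those others generate, so no element can
   be dropped. *)

Lemma val_inord (i : nat) : (i < 4)%N -> \val (inord i : 'I_4) = i.
Proof. exact: inordK. Qed.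

Definition mexp (e f g h : nat) : 'X_{1..4} :=
  [multinom nth 0%N [:: e; f; g; h] i | i < 4].

Lemma mexpE e f g h :
  [/\ mexp e f g h (inord 0) = e, mexp e f g h (inord 1) = f,
      mexp e f g h (inord 2) = g & mexp e f g h (inord 3) = h].
Proof. by rewrite !mnmE !inordK. Qed.

Lemma mexp_eta (m : 'X_{1..4}) :
  mexp (m (inord 0)) (m (inord 1)) (m (inord 2)) (m (inord 3)) = m.
Proof.
apply/mnmP => -[[|[|[|[|i]]]] lt_i4] //=; rewrite mnmE /=;
  by congr (m _); apply: val_inj; rewrite /= inordK.
Qed.

Lemma mexp_inj e f g h e' f' g' h' :
  mexp e f g h = mexp e' f' g' h' -> [/\ e = e', f = f', g = g' & h = h'].
Proof.
move=> E; have := mexpE e f g h; rewrite E.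
by case: (mexpE e' f' g' h') => -> -> -> -> [].
Qed.

Lemma mexp_eq e f g h e' f' g' h' :
  (mexp e f g h == mexp e' f' g' h') = [&& e == e', f == f', g == g' & h == h'].
Proof.
by apply/eqP/and4P => [/mexp_inj[-> -> -> ->]|[/eqP-> /eqP-> /eqP-> /eqP->]].
Qed.

Lemma mexp_le e f g h e' f' g' h' :
  (mexp e f g h <= mexp e' f' g' h')%MM = [&& e <= e', f <= f', g <= g' & h <= h']%N.
Proof.
apply/mnm_lepP/and4P => [le|[? ? ? ?]].
  by split; [move: (le (inord 0)) | move: (le (inord 1)) | move: (le (inord 2))
    | move: (le (inord 3))]; rewrite !mnmE inordK.
by move=> [[|[|[|[|i]]]] lt_i4]; rewrite !mnmE.
Qed.

Section Monomials.
Variable k : fieldType.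

Definition mono (e f g h : nat) : {mpoly k[4]} :=
  x1 k ^+ e * x2 k ^+ f * x3 k ^+ g * x4 k ^+ h.

Lemma monoM e f g h e' f' g' h' :
  mono e f g h * mono e' f' g' h' = mono (e + e') (f + f') (g + g') (h + h').
Proof. rewrite /mono !exprD; ring. Qed.

Lemma mono_mexp e f g h : mono e f g h = 'X_[mexp e f g h].
Proof.
have i0 : inord 0 = ord0 :> 'I_4 by apply: val_inj; rewrite /= inordK.
have i1 : inord 1 = lift ord0 ord0 :> 'I_4 by apply: val_inj; rewrite /= inordK.
have i2 : inord 2 = lift ord0 (lift ord0 ord0) :> 'I_4
  by apply: val_inj; rewrite /= inordK.
have i3 : inord 3 = lift ord0 (lift ord0 (lift ord0 ord0)) :> 'I_4
  by apply: val_inj; rewrite /= inordK.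
rewrite mpolyXE_id !big_ord_recl big_ord0 mulr1 !mulrA /mono /x1 /x2 /x3 /x4.
by rewrite i0 i1 i2 i3 !mnmE.
Qed.
End Monomials.

Lemma mcoeffMX_nodiv (R : nzRingType) n (r : {mpoly R[n]}) m v :
  ~~ (m <= v)%MM -> (r * 'X_[m])@_v = 0.
Proof.
apply: contraNeq; rewrite -mcoeff_msupp (perm_mem (msuppMX _ _)).
by case/mapP => m' _ ->; apply: lem_addr.
Qed.

Section IdealClosure.
Variables (k : fieldType) (hs : seq {mpoly k[4]}).
Local Notation I := (in_ideal hs).

Lemma ideal0 : I 0.
Proof.
exists (nseq (size hs) 0); rewrite size_nseq; split => //.
by rewrite big1 // => i _; rewrite nth_nseq ltn_ord mul0r.
Qed.

Lemma idealD p q : I p -> I q -> I (p + q).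
Proof.
move=> [cp [_ ->]] [cq [_ ->]].
exists (mkseq (fun i => cp`_i + cq`_i) (size hs)); rewrite size_mkseq; split => //.
by rewrite -big_split; apply: eq_bigr => i _; rewrite nth_mkseq ?ltn_ord // mulrDl.
Qed.

Lemma idealMl r p : I p -> I (r * p).
Proof.
move=> [c [_ ->]].
exists (mkseq (fun i => r * c`_i) (size hs)); rewrite size_mkseq; split => //.
by rewrite mulr_sumr; apply: eq_bigr => i _; rewrite nth_mkseq ?ltn_ord // mulrA.
Qed.

Lemma idealN p : I p -> I (- p).
Proof. by rewrite -mulN1r; apply: idealMl. Qed.

Lemma idealZ c p : I p -> I (c *: p).
Proof. by rewrite -mul_mpolyC; apply: idealMl. Qed.

Lemma ideal_nth j : (j < size hs)%N -> I hs`_j.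
Proof.
move=> lt_j; exists (mkseq (fun i => ((i == j)%:R : {mpoly k[4]})) (size hs)).
rewrite size_mkseq; split => //.
rewrite (bigD1 (Ordinal lt_j)) //= nth_mkseq // eqxx mul1r big1 ?addr0 // => i.
by rewrite nth_mkseq ?ltn_ord // -val_eqE /= => /negbTE ->; rewrite mul0r.
Qed.

Lemma ideal_mulmono e f g h e0 f0 g0 h0 e1 f1 g1 h1 :
  I (mono k e0 f0 g0 h0 - mono k e1 f1 g1 h1) ->
  I (mono k (e + e0) (f + f0) (g + g0) (h + h0) - mono k (e + e1) (f + f1) (g + g1) (h + h1)).
Proof. by rewrite -!monoM -mulrBr; apply: idealMl. Qed.

End IdealClosure.

Section CurveDegree.
Variables (k : fieldType) (a d : nat).

Definition tdeg (e f g h : nat) : nat :=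
  e * a + f * (2 * a + d) + g * (3 * a + 3 * d) + h * (4 * a + 6 * d).

Lemma tdegE e f g h :
  tdeg e f g h = (a * (e + 2 * f + 3 * g + 4 * h) + d * (f + 3 * g + 6 * h))%N.
Proof. rewrite /tdeg; ring. Qed.

Lemma curve_map_mono e f g h : curve_map a d (mono k e f g h) = 'X^(tdeg e f g h).
Proof.
rewrite /curve_map /mono !rmorphM !rmorphXn /= /x1 /x2 /x3 /x4 !mmapX !mmap1U.
rewrite /curve_exp !val_inord // -!exprM -!exprD /tdeg; congr (_ ^+ _); lia.
Qed.

Definition tdeg_mnm (m : 'X_{1..4}) : nat :=
  tdeg (m (inord 0)) (m (inord 1)) (m (inord 2)) (m (inord 3)).

Lemma curve_map_mpolyX (m : 'X_{1..4}) :
  curve_map a d ('X_[m] : {mpoly k[4]}) = 'X^(tdeg_mnm m).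
Proof. by rewrite -{1}(mexp_eta m) -mono_mexp curve_map_mono. Qed.

Lemma curve_mapB p q :
  curve_map a d (p - q) = curve_map a d p - curve_map a d q :> {poly k}.
Proof. exact: rmorphB. Qed.

Lemma binomial_kernel e f g h e' f' g' h' : tdeg e f g h = tdeg e' f' g' h' ->
  p4 a d (mono k e f g h - mono k e' f' g' h').
Proof. by move=> eq_deg; rewrite /p4 curve_mapB !curve_map_mono eq_deg subrr. Qed.

Lemma ideal_sub_kernel (hs : seq {mpoly k[4]}) p :
  (forall j, (j < size hs)%N -> p4 a d hs`_j) -> in_ideal hs p -> p4 a d p.
Proof.
move=> hs_ker [c [_ ->]]; rewrite /p4 /curve_map rmorph_sum /= big1 // => i _.
by rewrite rmorphM /= [X in _ * X]hs_ker ?mulr0.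
Qed.

End CurveDegree.

Lemma coprime_lin_eq (a d x y x' y' : nat) : coprime a d -> (y < a)%N -> (y' < a)%N ->
  (a * x + d * y = a * x' + d * y')%N -> y = y'.
Proof.
move=> co_ad lt_y lt_y'.
wlog le_yy' : x y x' y' lt_y lt_y' / (y <= y')%N.
  move=> wlog_le eq_xy; case: (leqP y y') => [le|/ltnW le]; first exact: wlog_le eq_xy.
  exact/esym/(wlog_le x' y' x y).
move=> eq_xy; have dvd_a : (a %| y' - y)%N.
  rewrite -(Gauss_dvdr _ co_ad) mulnBr; apply/dvdnP; exists (x - x')%N; rewrite mulnBl; lia.
case: (posnP (y' - y)) => [|pos]; first by lia.
by have := dvdn_leq pos dvd_a; lia.
Qed.

Section StandardMonomials.
Variables (k : fieldType) (a d : nat).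
Hypotheses (co_ad : coprime a d) (a_gt0 : (0 < a)%N).

Definition standard (f g h : nat) : bool :=
  [&& (f <= 2)%N, (g <= 1)%N & (f + 3 * g + 6 * h < a)%N].

Definition standard_mnm (m : 'X_{1..4}) : bool :=
  standard (m (inord 1)) (m (inord 2)) (m (inord 3)).

Lemma tdeg_standard_inj e f g h e' f' g' h' : standard f g h -> standard f' g' h' ->
  tdeg a d e f g h = tdeg a d e' f' g' h' -> [/\ e = e', f = f', g = g' & h = h'].
Proof.
move=> /and3P [le_f le_g lt_n] /and3P [le_f' le_g' lt_n']; rewrite !tdegE => eq_deg.
have eq_n : (f + 3 * g + 6 * h = f' + 3 * g' + 6 * h')%N by apply: coprime_lin_eq eq_deg.
have [eq_f eq_g eq_h] : [/\ f = f', g = g' & h = h'] by split; lia.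
move: eq_deg; rewrite eq_n => /addIn /eqP; rewrite eqn_pmul2l // => /eqP eq_e.
by split; lia.
Qed.

Lemma standard_mnm_inj (m m' : 'X_{1..4}) : standard_mnm m -> standard_mnm m' ->
  tdeg_mnm a d m = tdeg_mnm a d m' -> m = m'.
Proof.
move=> std std' /(tdeg_standard_inj std std') [eq0 eq1 eq2 eq3].
by rewrite -(mexp_eta m) -(mexp_eta m') eq0 eq1 eq2 eq3.
Qed.

(* An element of p4 supported on standard monomials is zero: each standard
   monomial s contributes alone to the coefficient of t^(tdeg s). *)
Lemma standard_kernel_eq0 (q : {mpoly k[4]}) :
  (forall m, m \in msupp q -> standard_mnm m) -> p4 a d q -> q = 0.
Proof.
move=> std_q q_ker; apply: msuppnil0; case E: (msupp q) => [|s r] //; exfalso.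
have s_q : s \in msupp q by rewrite E mem_head.
have coef_s : (curve_map a d q)`_(tdeg_mnm a d s) = q@_s.
  rewrite {1}(mpolyE q) /curve_map rmorph_sum coef_sum (bigD1_seq s) ?msupp_uniq //=.
  rewrite -mul_mpolyC rmorphM /= mmapC coefCM -/(curve_map a d _) curve_map_mpolyX.
  rewrite coefXn eqxx mulr1 big_seq_cond big1 ?addr0 // => m /andP [m_q ne_ms].
  rewrite -mul_mpolyC rmorphM /= mmapC coefCM -/(curve_map a d _) curve_map_mpolyX coefXn.
  case: eqP => [eq_deg|]; last by rewrite mulr0.
  by move: ne_ms; rewrite (standard_mnm_inj (std_q _ s_q) (std_q _ m_q) eq_deg) eqxx.
by move: s_q; rewrite mcoeff_msupp -coef_s q_ker coef0 eqxx.
Qed.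

End StandardMonomials.

Definition weight (f g h : nat) : nat := 3 * f + 7 * g + 13 * h.

Section Reduction.
Variables (k : fieldType) (a d : nat) (hs : seq {mpoly k[4]}).
Hypotheses (co_ad : coprime a d) (a_gt0 : (0 < a)%N).
Hypothesis hs_kernel : forall j, (j < size hs)%N -> p4 a d hs`_j.
Local Notation I := (in_ideal hs).

Definition lowers (f g h : nat) : Prop := exists e' f' g' h',
  (weight f' g' h' < weight f g h)%N /\ I (mono k 0 f g h - mono k e' f' g' h').

Lemma lowers_of_nth j e' f' g' h' f g h : (j < size hs)%N ->
  hs`_j = mono k e' f' g' h' - mono k 0 f g h -> (weight f' g' h' < weight f g h)%N ->
  lowers f g h.
Proof.
move=> lt_j hs_j lt_w; exists e', f', g', h'; split => //.
by rewrite -opprB -hs_j; apply/idealN/ideal_nth.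
Qed.

Hypothesis g2_mem : I (mono k 0 3 0 0 - mono k 3 0 1 0).
Hypothesis g1_mem : I (mono k 0 0 2 0 - mono k 2 0 0 1).
Hypothesis lowers_overflow : forall f g h, (f <= 2)%N -> (g <= 1)%N ->
  (a <= f + 3 * g + 6 * h)%N ->
  exists f0 g0 h0, [/\ (f0 <= f)%N, (g0 <= g)%N, (h0 <= h)%N & lowers f0 g0 h0].

Lemma lower_step e f g h : ~~ standard a f g h -> exists e' f' g' h',
  (weight f' g' h' < weight f g h)%N /\ I (mono k e f g h - mono k e' f' g' h').
Proof.
move=> nonstd.
have [f0 [g0 [h0 [le_f le_g le_h [e1 [f1 [g1 [h1 [lt_w mem]]]]]]]]] :
    exists f0 g0 h0, [/\ (f0 <= f)%N, (g0 <= g)%N, (h0 <= h)%N & lowers f0 g0 h0].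
  case: (leqP 3 f) => [ge_f|lt_f].
    by exists 3%N, 0%N, 0%N; split => //; exists 3%N, 0%N, 1%N, 0%N.
  case: (leqP 2 g) => [ge_g|lt_g].
    by exists 0%N, 2%N, 0%N; split => //; exists 2%N, 0%N, 0%N, 1%N.
  apply: lowers_overflow; rewrite ?ltnS //.
  by move: nonstd; rewrite /standard -ltnS lt_f -ltnS lt_g -leqNgt.
exists (e + e1)%N, (f - f0 + f1)%N, (g - g0 + g1)%N, (h - h0 + h1)%N.
split; first by move: lt_w; rewrite /weight; lia.
by have := ideal_mulmono e (f - f0) (g - g0) (h - h0) mem; rewrite !addn0 !subnK.
Qed.

Lemma reduce_mono e f g h : exists e' f' g' h',
  standard a f' g' h' /\ I (mono k e f g h - mono k e' f' g' h').
Proof.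
have [n] := ubnP (weight f g h); elim: n => // n IHn in e f g h *; rewrite ltnS => le_w.
case std: (standard a f g h).
  by exists e, f, g, h; split => //; rewrite subrr; apply: ideal0.
have [e1 [f1 [g1 [h1 [lt_w mem1]]]]] := lower_step e (negbT std).
have [e' [f' [g' [h' [std' mem']]]]] := IHn e1 f1 g1 h1 (leq_trans lt_w le_w).
exists e', f', g', h'; split => //.
by rewrite -(subrK (mono k e1 f1 g1 h1) (mono k e f g h)) -addrA; apply: idealD.
Qed.

Lemma reduce_poly p : exists q,
  (forall m, m \in msupp q -> standard_mnm a m) /\ I (p - q).
Proof.
rewrite {1}(mpolyE p); elim: (msupp p) => [|m r [q [std_q mem]]].
  exists 0; rewrite big_nil subrr; split; last exact: ideal0.
  by move=> m; rewrite msupp0.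
have [e' [f' [g' [h' [std' mem']]]]] :=
  reduce_mono (m (inord 0)) (m (inord 1)) (m (inord 2)) (m (inord 3)).
exists (p@_m *: mono k e' f' g' h' + q); split.
  move=> s /msuppD_le; rewrite mem_cat => /orP [/msuppZ_le|/std_q //].
  rewrite mono_mexp msuppX mem_seq1 => /eqP ->.
  by rewrite /standard_mnm; case: (mexpE e' f' g' h') => _ -> -> ->.
rewrite big_cons opprD addrACA -scalerBr; apply: idealD => //; apply: idealZ.
by rewrite -{1}(mexp_eta m) -mono_mexp.
Qed.

Theorem generates_of_lowering : generates hs (p4 a d).
Proof.
move=> p; split; first exact: ideal_sub_kernel.
move=> p_ker; have [q [std_q mem]] := reduce_poly p.
suff q0 : q = 0 by rewrite q0 subr0 in mem.
apply: (standard_kernel_eq0 co_ad a_gt0 std_q).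
move: (ideal_sub_kernel hs_kernel mem); rewrite /p4 curve_mapB p_ker sub0r => /eqP.
by rewrite oppr_eq0 => /eqP.
Qed.

End Reduction.

Section Irredundance.
Variables (k : fieldType) (a d : nat).

Lemma mcoeff_binomial_nodiv (r : {mpoly k[4]}) e f g h e' f' g' h' v :
  ~~ (mexp e f g h <= v)%MM -> ~~ (mexp e' f' g' h' <= v)%MM ->
  (r * (mono k e f g h - mono k e' f' g' h'))@_v = 0.
Proof.
by move=> ndiv ndiv'; rewrite mulrBr mcoeffB !mono_mexp !mcoeffMX_nodiv // subrr.
Qed.

Lemma mcoeff_binomial_neq0 e f g h e' f' g' h' v :
  mexp e f g h != mexp e' f' g' h' -> v \in [:: mexp e f g h; mexp e' f' g' h'] ->
  (mono k e f g h - mono k e' f' g' h')@_v != 0.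
Proof.
rewrite mcoeffB !mono_mexp !mcoeffX !inE => neq /orP [] /eqP ->.
  by rewrite eqxx (eq_sym (mexp e' f' g' h')) (negbTE neq) subr0 oner_eq0.
by rewrite eqxx (negbTE neq) sub0r oppr_eq0 oner_eq0.
Qed.

Lemma ideal_mcoeff_eq0 (hs : seq {mpoly k[4]}) v p :
  (forall i r, (i < size hs)%N -> (r * hs`_i)@_v = 0) -> in_ideal hs p -> p@_v = 0.
Proof.
by move=> vanish [c [_ ->]]; rewrite raddf_sum big1 // => i _; apply: vanish.
Qed.

Lemma not_generates_of_mcoeff (hs : seq {mpoly k[4]}) v (p : {mpoly k[4]}) :
  p4 a d p -> p@_v != 0 ->
  (forall i r, (i < size hs)%N -> (r * hs`_i)@_v = 0) -> ~ generates hs (p4 a d).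
Proof.
move=> p_ker p_v vanish gen_hs.
by move: p_v; rewrite (ideal_mcoeff_eq0 vanish ((gen_hs p).2 p_ker)) eqxx.
Qed.

Lemma minimal_of_witnesses (hs : seq {mpoly k[4]}) (ws : seq 'X_{1..4}) :
  (forall j, (j < size hs)%N -> p4 a d hs`_j) ->
  (forall j, (j < size hs)%N -> hs`_j@_(nth 0%MM ws j) != 0) ->
  (forall i j, (i < size hs)%N -> (j < size hs)%N -> i != j ->
     forall r, (r * hs`_i)@_(nth 0%MM ws j) = 0) ->
  forall j, (j < size hs)%N -> ~ generates (take j hs ++ drop j.+1 hs) (p4 a d).
Proof.
move=> hs_ker wit vanish j lt_j.
apply: (not_generates_of_mcoeff (hs_ker j lt_j) (wit j lt_j)) => i r.
rewrite size_cat size_take size_drop lt_j nth_cat size_take lt_j => lt_i.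
case: ltnP => [lt_ij|le_ji].
  by rewrite nth_take //; apply: vanish; rewrite ?neq_ltn ?lt_ij //; lia.
by rewrite nth_drop; apply: vanish => //; lia.
Qed.

End Irredundance.

Section Cases.
Variables (k : fieldType) (a d : nat).
Hypothesis co_ad : coprime a d.

Lemma minimal_H1_exceptional : a = 7%N -> d = 1%N ->
  minimally_generates (H k 1 1 1) (p4 a d).
Proof.
move=> def_a def_d; have a_gt0 : (0 < a)%N by lia.
pose hs := [:: mono k 0 0 2 0 - mono k 2 0 0 1; mono k 0 3 0 0 - mono k 3 0 1 0;
  mono k 7 0 0 0 - mono k 0 1 0 1; mono k 4 2 0 0 - mono k 0 0 1 1;
  mono k 2 2 1 0 - mono k 0 0 0 2].
have -> : H k 1 1 1 = hs by rewrite /H /hs /mono /= !expr0 !mulr1 !mul1r !expr1.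
have hs_ker : forall j, (j < size hs)%N -> p4 a d hs`_j.
  by move=> [|[|[|[|[|j]]]]] //= _; apply: binomial_kernel; rewrite /tdeg def_a def_d.
split.
  apply: (generates_of_lowering co_ad a_gt0 hs_ker);
    [exact: (ideal_nth (j := 1)) | exact: (ideal_nth (j := 0))|].
  move=> f g h le_f le_g; rewrite def_a => over.
  case: (leqP 2 h) => [ge_h|lt_h].
    exists 0%N, 0%N, 2%N; split => //.
    by apply: (lowers_of_nth (j := 4)) => //; rewrite /weight; lia.
  case: (leqP 1 g) => [ge_g|lt_g].
    exists 0%N, 1%N, 1%N; split => //; first lia.
    by apply: (lowers_of_nth (j := 3)) => //; rewrite /weight; lia.
  exists 1%N, 0%N, 1%N; split => //; try lia.
  by apply: (lowers_of_nth (j := 2)) => //; rewrite /weight; lia.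
apply: (minimal_of_witnesses (ws := [:: mexp 0 0 2 0; mexp 0 3 0 0; mexp 0 1 0 1;
  mexp 0 0 1 1; mexp 0 0 0 2])) => //.
  move=> [|[|[|[|[|j]]]]] //= _; apply: mcoeff_binomial_neq0;
    rewrite ?mexp_eq ?inE ?eqxx ?orbT //; lia.
move=> [|[|[|[|[|i]]]]] [|[|[|[|[|j]]]]] //= _ _ _ r;
  apply: mcoeff_binomial_nodiv; rewrite mexp_le; lia.
Qed.

Variable m : nat.
Hypothesis m_gt0 : (0 < m)%N.

Lemma minimal_H0 : a = (6 * m)%N -> minimally_generates (H k m d 0) (p4 a d).
Proof.
move=> def_a; have a_gt0 : (0 < a)%N by lia.
pose hs := [:: mono k 0 0 2 0 - mono k 2 0 0 1; mono k 0 3 0 0 - mono k 3 0 1 0;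
  mono k (4 * m + d) 0 0 0 - mono k 0 0 0 m].
have -> : H k m d 0 = hs by rewrite /H /hs /mono /= !expr0 !mulr1 !mul1r expr1.
have hs_ker : forall j, (j < size hs)%N -> p4 a d hs`_j.
  by move=> [|[|[|j]]] //= _; apply: binomial_kernel; rewrite /tdeg def_a; nia.
split.
  apply: (generates_of_lowering co_ad a_gt0 hs_ker);
    [exact: (ideal_nth (j := 1)) | exact: (ideal_nth (j := 0))|].
  move=> f g h le_f le_g; rewrite def_a => over.
  exists 0%N, 0%N, m; split => //; first lia.
  by apply: (lowers_of_nth (j := 2)) => //; rewrite /weight; lia.
apply: (minimal_of_witnesses (ws := [:: mexp 0 0 2 0; mexp 0 3 0 0; mexp 0 0 0 m])) => //.
  move=> [|[|[|j]]] //= _; apply: mcoeff_binomial_neq0;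
    rewrite ?mexp_eq ?inE ?eqxx ?orbT //; lia.
move=> [|[|[|i]]] [|[|[|j]]] //= _ _ _ r; apply: mcoeff_binomial_nodiv; rewrite mexp_le; lia.
Qed.

Lemma minimal_H1 : a = (6 * m + 1)%N -> (0 < d)%N -> ~~ ((m == 1%N) && (d == 1%N)) ->
  minimally_generates (H k m d 1) (p4 a d).
Proof.
move=> def_a d_gt0 not11; have a_gt0 : (0 < a)%N by lia.
have ge6 : (6 <= 4 * m + d)%N by lia.
pose hs := [:: mono k 0 0 2 0 - mono k 2 0 0 1; mono k 0 3 0 0 - mono k 3 0 1 0;
  mono k (4 * m + d - 6) 5 0 0 - mono k 0 0 0 m.+1;
  mono k (4 * m + d - 1) 2 0 0 - mono k 0 0 1 m;
  mono k (4 * m + d + 2) 0 0 0 - mono k 0 1 0 m].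
have -> : H k m d 1 = hs.
  by rewrite /H (negbTE not11) /hs /mono /= !expr0 !mulr1 !mul1r !expr1.
have hs_ker : forall j, (j < size hs)%N -> p4 a d hs`_j.
  by move=> [|[|[|[|[|j]]]]] //= _; apply: binomial_kernel; rewrite /tdeg def_a; nia.
split.
  apply: (generates_of_lowering co_ad a_gt0 hs_ker);
    [exact: (ideal_nth (j := 1)) | exact: (ideal_nth (j := 0))|].
  move=> f g h le_f le_g; rewrite def_a => over.
  case: (leqP m.+1 h) => [ge_h|lt_h].
    exists 0%N, 0%N, m.+1; split => //.
    by apply: (lowers_of_nth (j := 2)) => //; rewrite /weight; lia.
  case: (leqP 1 g) => [ge_g|lt_g].
    exists 0%N, 1%N, m; split => //; first lia.
    by apply: (lowers_of_nth (j := 3)) => //; rewrite /weight; lia.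
  exists 1%N, 0%N, m; split => //; try lia.
  by apply: (lowers_of_nth (j := 4)) => //; rewrite /weight; lia.
apply: (minimal_of_witnesses (ws := [:: mexp 0 0 2 0; mexp 0 3 0 0; mexp 0 0 0 m.+1;
  mexp 0 0 1 m; mexp 0 1 0 m])) => //.
  move=> [|[|[|[|[|j]]]]] //= _; apply: mcoeff_binomial_neq0;
    rewrite ?mexp_eq ?inE ?eqxx ?orbT //; lia.
move=> [|[|[|[|[|i]]]]] [|[|[|[|[|j]]]]] //= _ _ _ r;
  apply: mcoeff_binomial_nodiv; rewrite mexp_le; lia.
Qed.

Lemma minimal_H2 : a = (6 * m + 2)%N -> minimally_generates (H k m d 2) (p4 a d).
Proof.
move=> def_a; have a_gt0 : (0 < a)%N by lia.
pose hs := [:: mono k 0 0 2 0 - mono k 2 0 0 1; mono k 0 3 0 0 - mono k 3 0 1 0;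
  mono k (4 * m + d - 4) 4 0 0 - mono k 0 0 0 m.+1;
  mono k (4 * m + d + 1) 1 0 0 - mono k 0 0 1 m;
  mono k (4 * m + d + 4) 0 0 0 - mono k 0 2 0 m].
have -> : H k m d 2 = hs by rewrite /H /hs /mono /= !expr0 !mulr1 !mul1r !expr1.
have hs_ker : forall j, (j < size hs)%N -> p4 a d hs`_j.
  by move=> [|[|[|[|[|j]]]]] //= _; apply: binomial_kernel; rewrite /tdeg def_a; nia.
split.
  apply: (generates_of_lowering co_ad a_gt0 hs_ker);
    [exact: (ideal_nth (j := 1)) | exact: (ideal_nth (j := 0))|].
  move=> f g h le_f le_g; rewrite def_a => over.
  case: (leqP m.+1 h) => [ge_h|lt_h].
    exists 0%N, 0%N, m.+1; split => //.
    by apply: (lowers_of_nth (j := 2)) => //; rewrite /weight; lia.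
  case: (leqP 1 g) => [ge_g|lt_g].
    exists 0%N, 1%N, m; split => //; first lia.
    by apply: (lowers_of_nth (j := 3)) => //; rewrite /weight; lia.
  exists 2%N, 0%N, m; split => //; try lia.
  by apply: (lowers_of_nth (j := 4)) => //; rewrite /weight; lia.
apply: (minimal_of_witnesses (ws := [:: mexp 0 0 2 0; mexp 0 3 0 0; mexp 0 0 0 m.+1;
  mexp 0 0 1 m; mexp 0 2 0 m])) => //.
  move=> [|[|[|[|[|j]]]]] //= _; apply: mcoeff_binomial_neq0;
    rewrite ?mexp_eq ?inE ?eqxx ?orbT //; lia.
move=> [|[|[|[|[|i]]]]] [|[|[|[|[|j]]]]] //= _ _ _ r;
  apply: mcoeff_binomial_nodiv; rewrite mexp_le; lia.
Qed.

Lemma minimal_H3 : a = (6 * m + 3)%N -> minimally_generates (H k m d 3) (p4 a d).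
Proof.
move=> def_a; have a_gt0 : (0 < a)%N by lia.
pose hs := [:: mono k 0 0 2 0 - mono k 2 0 0 1; mono k 0 3 0 0 - mono k 3 0 1 0;
  mono k (4 * m + d - 2) 3 0 0 - mono k 0 0 0 m.+1;
  mono k (4 * m + d + 3) 0 0 0 - mono k 0 0 1 m].
have -> : H k m d 3 = hs by rewrite /H /hs /mono /= !expr0 !mulr1 !mul1r !expr1.
have hs_ker : forall j, (j < size hs)%N -> p4 a d hs`_j.
  by move=> [|[|[|[|j]]]] //= _; apply: binomial_kernel; rewrite /tdeg def_a; nia.
split.
  apply: (generates_of_lowering co_ad a_gt0 hs_ker);
    [exact: (ideal_nth (j := 1)) | exact: (ideal_nth (j := 0))|].
  move=> f g h le_f le_g; rewrite def_a => over.
  case: (leqP m.+1 h) => [ge_h|lt_h].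
    exists 0%N, 0%N, m.+1; split => //.
    by apply: (lowers_of_nth (j := 2)) => //; rewrite /weight; lia.
  exists 0%N, 1%N, m; split => //; try lia.
  by apply: (lowers_of_nth (j := 3)) => //; rewrite /weight; lia.
apply: (minimal_of_witnesses (ws := [:: mexp 0 0 2 0; mexp 0 3 0 0; mexp 0 0 0 m.+1;
  mexp 0 0 1 m])) => //.
  move=> [|[|[|[|j]]]] //= _; apply: mcoeff_binomial_neq0;
    rewrite ?mexp_eq ?inE ?eqxx ?orbT //; lia.
move=> [|[|[|[|i]]]] [|[|[|[|j]]]] //= _ _ _ r;
  apply: mcoeff_binomial_nodiv; rewrite mexp_le; lia.
Qed.

Lemma minimal_H4 : a = (6 * m + 4)%N -> minimally_generates (H k m d 4) (p4 a d).
Proof.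
move=> def_a; have a_gt0 : (0 < a)%N by lia.
pose hs := [:: mono k 0 0 2 0 - mono k 2 0 0 1; mono k 0 3 0 0 - mono k 3 0 1 0;
  mono k (4 * m + d) 2 0 0 - mono k 0 0 0 m.+1;
  mono k (4 * m + d + 5) 0 0 0 - mono k 0 1 1 m].
have -> : H k m d 4 = hs by rewrite /H /hs /mono /= !expr0 !mulr1 !mul1r !expr1.
have hs_ker : forall j, (j < size hs)%N -> p4 a d hs`_j.
  by move=> [|[|[|[|j]]]] //= _; apply: binomial_kernel; rewrite /tdeg def_a; nia.
split.
  apply: (generates_of_lowering co_ad a_gt0 hs_ker);
    [exact: (ideal_nth (j := 1)) | exact: (ideal_nth (j := 0))|].
  move=> f g h le_f le_g; rewrite def_a => over.
  case: (leqP m.+1 h) => [ge_h|lt_h].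
    exists 0%N, 0%N, m.+1; split => //.
    by apply: (lowers_of_nth (j := 2)) => //; rewrite /weight; lia.
  exists 1%N, 1%N, m; split => //; try lia.
  by apply: (lowers_of_nth (j := 3)) => //; rewrite /weight; lia.
apply: (minimal_of_witnesses (ws := [:: mexp 0 0 2 0; mexp 0 3 0 0; mexp 0 0 0 m.+1;
  mexp 0 1 1 m])) => //.
  move=> [|[|[|[|j]]]] //= _; apply: mcoeff_binomial_neq0;
    rewrite ?mexp_eq ?inE ?eqxx ?orbT //; lia.
move=> [|[|[|[|i]]]] [|[|[|[|j]]]] //= _ _ _ r;
  apply: mcoeff_binomial_nodiv; rewrite mexp_le; lia.
Qed.

Lemma minimal_H5 : a = (6 * m + 5)%N -> minimally_generates (H k m d 5) (p4 a d).
Proof.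
move=> def_a; have a_gt0 : (0 < a)%N by lia.
pose hs := [:: mono k 0 0 2 0 - mono k 2 0 0 1; mono k 0 3 0 0 - mono k 3 0 1 0;
  mono k (4 * m + d + 2) 1 0 0 - mono k 0 0 0 m.+1;
  mono k (4 * m + d + 7) 0 0 0 - mono k 0 2 1 m].
have -> : H k m d 5 = hs by rewrite /H /hs /mono /= !expr0 !mulr1 !mul1r !expr1.
have hs_ker : forall j, (j < size hs)%N -> p4 a d hs`_j.
  by move=> [|[|[|[|j]]]] //= _; apply: binomial_kernel; rewrite /tdeg def_a; nia.
split.
  apply: (generates_of_lowering co_ad a_gt0 hs_ker);
    [exact: (ideal_nth (j := 1)) | exact: (ideal_nth (j := 0))|].
  move=> f g h le_f le_g; rewrite def_a => over.
  case: (leqP m.+1 h) => [ge_h|lt_h].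
    exists 0%N, 0%N, m.+1; split => //.
    by apply: (lowers_of_nth (j := 2)) => //; rewrite /weight; lia.
  exists 2%N, 1%N, m; split => //; try lia.
  by apply: (lowers_of_nth (j := 3)) => //; rewrite /weight; lia.
apply: (minimal_of_witnesses (ws := [:: mexp 0 0 2 0; mexp 0 3 0 0; mexp 0 0 0 m.+1;
  mexp 0 2 1 m])) => //.
  move=> [|[|[|[|j]]]] //= _; apply: mcoeff_binomial_neq0;
    rewrite ?mexp_eq ?inE ?eqxx ?orbT //; lia.
move=> [|[|[|[|i]]]] [|[|[|[|j]]]] //= _ _ _ r;
  apply: mcoeff_binomial_nodiv; rewrite mexp_le; lia.
Qed.

End Cases.

Theorem theorem4p3 (k : fieldType) (a d : nat) :
  (0 < d)%N -> (7 <= a)%N -> coprime a d ->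
  minimally_generates (@H k (a %/ 6) d (a %% 6)) (@p4 k a d).
Proof.
move=> d_gt0 a_ge7 co_ad.
have def_a := divn_eq a 6; have lt_q := ltn_pmod a (isT : (0 < 6)%N).
have m_gt0 : (0 < a %/ 6)%N by lia.
move: (a %/ 6)%N (a %% 6)%N def_a lt_q m_gt0 => m q def_a lt_q m_gt0.
case: q def_a lt_q => [|[|[|[|[|[|q]]]]]] def_a lt_q //.
- by apply: minimal_H0 => //; lia.
- case: (boolP ((m == 1%N) && (d == 1%N))) => [/andP [/eqP m1 /eqP d1]|not11].
    by subst m d; apply: minimal_H1_exceptional => //; lia.
  by apply: minimal_H1 => //; lia.
- by apply: minimal_H2 => //; lia.
- by apply: minimal_H3 => //; lia.
- by apply: minimal_H4 => //; lia.
- by apply: minimal_H5 => //; lia.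
Qed.
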